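(* In the instance constructed below, if there are $k$ distinct elements (distinct indices) $a_1,\dots,a_k$ of the multiset $\mathcal A$ and an index $m\in\{1,\dots,k-1\}$ with $\sum_{j=1}^m a_j=\sum_{j=m+1}^k a_j$, then the $2k$ rectangles $R_{a_1},R'_{a_1},\dots,R_{a_k},R'_{a_k}$ can all be packed feasibly into $K$ without rotating any of them. Moreover, every feasible packing of this instance (with or without rotations) contains at most $2k$ rectangles, so in this case $|\mathrm{OPT}|=2k$ both for 2DK and for 2DKR.
   Context: Let $k\ge 9$ be an odd integer and $\mathcal A$ a multiset of $n$ positive integers; let $M=\max_{a\in\mathcal A}a$ and $N=2Mk^4$, $K=[0,N]\times[0,N]$. For each element $a$ of $\mathcal A$ (counted with multiplicity) create two items (rectangles) $R_a$ with width $w(R_a)=N/k+a$ and height $h(R_a)=N/2-a$, and $R'_a$ with width $w(R'_a)=N/k-a$ and height $h(R'_a)=N/2+a$, each of profit $1$. A feasible packing places a subset of the items as pairwise disjoint open axis-parallel rectangles inside $K$; in 2DK the items keep their given orientation, in 2DKR each may be rotated by $90^\circ$. $\mathrm{OPT}$ denotes a maximum-cardinality feasible packing. *)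

From Stdlib Require Import Reals Lra Lia List Permutation Arith.
Import ListNotations.
Open Scope R_scope.

(* The multiset A is a list of naturals (indices 0..n-1 = positions in the list). *)

Definition Mmax (A : list nat) : nat := list_max A.
Definition Nsize (A : list nat) (k : nat) : R := 2 * INR (Mmax A) * INR k ^ 4.

(* An item is identified by (index i of an element of A, primed?):
   (i,false) is R_{a_i}, (i,true) is R'_{a_i}. *)
Definition item := (nat * bool)%type.

Definition item_w (A : list nat) (k : nat) (it : item) : R :=
  let a := INR (nth (fst it) A 0%nat) in
  if snd it then Nsize A k / INR k - a else Nsize A k / INR k + a.

Definition item_h (A : list nat) (k : nat) (it : item) : R :=
  let a := INR (nth (fst it) A 0%nat) in
  if snd it then Nsize A k / 2 + a else Nsize A k / 2 - a.

Record placement := mkPlacement {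
  pl_item : item;
  pl_rot : bool;
  pl_x : R;
  pl_y : R }.

Definition pw A k (p : placement) : R :=
  if pl_rot p then item_h A k (pl_item p) else item_w A k (pl_item p).
Definition ph A k (p : placement) : R :=
  if pl_rot p then item_w A k (pl_item p) else item_h A k (pl_item p).

Definition inside_K A k (p : placement) : Prop :=
  0 <= pl_x p /\ pl_x p + pw A k p <= Nsize A k /\
  0 <= pl_y p /\ pl_y p + ph A k p <= Nsize A k.

(* the open rectangles (x,x+w) x (y,y+h) of p and q are disjoint
   (all item sides are positive in the instance) *)
Definition disjoint_open A k (p q : placement) : Prop :=
  pl_x p + pw A k p <= pl_x q \/ pl_x q + pw A k q <= pl_x p \/
  pl_y p + ph A k p <= pl_y q \/ pl_y q + ph A k q <= pl_y p.

Definition dummy_pl : placement := mkPlacement (0%nat, false) false 0 0.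

(* Feasible packing of a subset of the items; [allow_rot = false] is 2DK,
   [allow_rot = true] is 2DKR. *)
Definition feasible (allow_rot : bool) (A : list nat) (k : nat)
    (P : list placement) : Prop :=
  (forall p, In p P ->
     (fst (pl_item p) < length A)%nat /\
     (allow_rot = false -> pl_rot p = false) /\
     inside_K A k p) /\
  NoDup (map pl_item P) /\
  (forall i j, (i < length P)%nat -> (j < length P)%nat -> i <> j ->
     disjoint_open A k (nth i P dummy_pl) (nth j P dummy_pl)).

Definition list_sum_nat (l : list nat) : nat := fold_right Nat.add 0%nat l.

From Stdlib Require Import Reals Lra Lia List Permutation Arith.
Import ListNotations.
Open Scope R_scope.

(* Upper bound: the horizontal lines y = j M (0 <= j <= 2k^4) cut an item of height h at
   least h/M - 1 times, and the items cut by one line have total width at most N.  Summing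
   over the lines bounds the total area of a packing by N^2 + M N, while every item has area
   at least N^2/(2k) - O(M N); so no 2k + 1 items fit.

   Packing: split the chosen elements into the two halves of equal sum.  The first half is
   packed as a block with the R_{a_j} on the bottom edge of K and the R'_{a_j} hanging from
   its top edge, both rows sorted by decreasing a_j: an R'_{a_j} reaches below height N/2
   only above R_{a_i} with a_i < a_j, which lie further right.  The second half is the same
   block turned by 180 degrees.  Equal sums make the rows of the two blocks have complementary
   widths m u + S, (k-m) u - S and m u - S, (k-m) u + S, with u = N/k. *)

Section FilteredSums.

Context {T : Type}.

Fixpoint sum_if (L : list T) (P : T -> bool) (w : T -> R) : R :=
  match L with
  | [] => 0
  | x :: L' => (if P x then w x else 0) + sum_if L' P w
  end.

Lemma sum_if_ge0 L P w : (forall x, In x L -> 0 <= w x) -> 0 <= sum_if L P w.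
Proof.
  induction L as [|x L IH]; simpl; intros Hw; [lra|].
  assert (0 <= w x) by auto. assert (0 <= sum_if L P w) by auto.
  destruct (P x); lra.
Qed.

Lemma sum_if_le_w L P w w' :
  (forall x, In x L -> P x = true -> w x <= w' x) -> sum_if L P w <= sum_if L P w'.
Proof.
  induction L as [|x L IH]; simpl; intros Hw; [lra|].
  assert (sum_if L P w <= sum_if L P w') by auto.
  destruct (P x) eqn:E; [assert (w x <= w' x) by auto|]; lra.
Qed.

Lemma sum_if_le_pred L P Q w :
  (forall x, In x L -> P x = true -> Q x = true) ->
  (forall x, In x L -> 0 <= w x) -> sum_if L P w <= sum_if L Q w.
Proof.
  induction L as [|x L IH]; simpl; intros HPQ Hw; [lra|].
  assert (sum_if L P w <= sum_if L Q w) by auto.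
  assert (0 <= w x) by auto.
  destruct (P x) eqn:E; [rewrite (HPQ x (or_introl eq_refl) E)|destruct (Q x)]; lra.
Qed.

Lemma sum_if_add_le_pred L P Q w i :
  NoDup L -> In i L -> P i = false -> Q i = true ->
  (forall x, In x L -> P x = true -> Q x = true) ->
  (forall x, In x L -> 0 <= w x) -> sum_if L P w + w i <= sum_if L Q w.
Proof.
  induction L as [|x L IH]; simpl; intros ND Hi HPi HQi HPQ Hw; [contradiction|].
  inversion ND as [|? ? Hx ND']; subst.
  destruct Hi as [<-|Hi].
  - rewrite HPi, HQi.
    assert (sum_if L P w <= sum_if L Q w) by (apply sum_if_le_pred; auto). lra.
  - assert (sum_if L P w + w i <= sum_if L Q w) by (apply IH; auto).
    assert (0 <= w x) by auto.
    destruct (P x) eqn:E; [rewrite (HPQ x (or_introl eq_refl) E)|destruct (Q x)]; lra.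
Qed.

Lemma sum_if_plus L P w v :
  sum_if L P (fun x => w x + v x) = sum_if L P w + sum_if L P v.
Proof. induction L as [|x L IH]; simpl; [lra|]. rewrite IH. destruct (P x); lra. Qed.

Lemma sum_if_minus L P w v :
  sum_if L P (fun x => w x - v x) = sum_if L P w - sum_if L P v.
Proof. induction L as [|x L IH]; simpl; [lra|]. rewrite IH. destruct (P x); lra. Qed.

Lemma sum_if_scal L P c w : sum_if L P (fun x => c * w x) = c * sum_if L P w.
Proof. induction L as [|x L IH]; simpl; [lra|]. rewrite IH. destruct (P x); lra. Qed.

Lemma sum_if_const L c : sum_if L (fun _ => true) (fun _ => c) = INR (length L) * c.
Proof.
  induction L as [|x L IH]; [simpl; lra|].
  cbn [sum_if length]. rewrite S_INR, IH. lra.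
Qed.

Lemma sum_if_const_count L P c :
  sum_if L P (fun _ => c) = c * sum_if L P (fun _ => 1).
Proof. induction L as [|x L IH]; simpl; [lra|]. rewrite IH. destruct (P x); lra. Qed.

Lemma sum_if_app L1 L2 P w : sum_if (L1 ++ L2) P w = sum_if L1 P w + sum_if L2 P w.
Proof. induction L1 as [|x L IH]; simpl; [lra|]. rewrite IH. lra. Qed.

Lemma sum_if_filter L P w : sum_if L P w = sum_if (filter P L) (fun _ => true) w.
Proof. induction L as [|x L IH]; simpl; [lra|]. destruct (P x); simpl; rewrite IH; lra. Qed.

Lemma sum_if_true_if L (P : T -> bool) w :
  sum_if L (fun _ => true) (fun x => if P x then w x else 0) = sum_if L P w.
Proof. induction L as [|x L IH]; simpl; [lra|]. rewrite IH. destruct (P x); lra. Qed.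

Lemma sum_if_split L P w :
  sum_if L (fun _ => true) w = sum_if L P w + sum_if L (fun x => negb (P x)) w.
Proof. induction L as [|x L IH]; simpl; [lra|]. rewrite IH. destruct (P x); simpl; lra. Qed.

End FilteredSums.

Lemma sum_if_swap {T U} (L : list T) (J : list U) (c : U -> T -> bool) (w : T -> R) :
  sum_if J (fun _ => true) (fun j => sum_if L (c j) w) =
  sum_if L (fun _ => true) (fun x => sum_if J (fun j => c j x) (fun _ => w x)).
Proof.
  induction J as [|j J IH]; simpl.
  - induction L; simpl; lra.
  - rewrite IH, <- (sum_if_true_if L (c j)), <- sum_if_plus. reflexivity.
Qed.

Lemma sum_if_INR (L : list nat) (g : nat -> nat) :
  sum_if L (fun _ => true) (fun x => INR (g x)) = INR (list_sum_nat (map g L)).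
Proof. induction L as [|x L IH]; simpl; [lra|]. rewrite IH, plus_INR. lra. Qed.

Lemma ForallOrdPairs_filter {T} (Rl : T -> T -> Prop) (b : T -> bool) (l : list T) :
  ForallOrdPairs Rl l -> ForallOrdPairs Rl (filter b l).
Proof.
  induction 1 as [|x l Hx _ IH]; simpl; [constructor|].
  destruct (b x); auto. constructor; auto.
  rewrite Forall_forall in *. intros y Hy. apply filter_In in Hy. apply Hx; tauto.
Qed.

Lemma ForallOrdPairs_impl_in {T} (Rl Rl' : T -> T -> Prop) (l : list T) :
  (forall x y, In x l -> In y l -> Rl x y -> Rl' x y) ->
  ForallOrdPairs Rl l -> ForallOrdPairs Rl' l.
Proof.
  intros H F. induction F as [|x l Hx _ IH]; constructor.
  - rewrite Forall_forall in *. intros y Hy. apply H; simpl; auto.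
  - apply IH. intros y z Hy Hz. apply H; simpl; auto.
Qed.

Lemma ForallOrdPairs_of_nth {T} (Rl : T -> T -> Prop) (l : list T) d :
  (forall i j, (i < length l)%nat -> (j < length l)%nat -> i <> j ->
     Rl (nth i l d) (nth j l d)) -> ForallOrdPairs Rl l.
Proof.
  induction l as [|x l IH]; intros H; constructor.
  - rewrite Forall_forall. intros y Hy.
    destruct (In_nth l y d Hy) as [j [Hj <-]].
    apply (H 0%nat (S j)); simpl; lia.
  - apply IH. intros i j Hi Hj Hij. apply (H (S i) (S j)); simpl; lia.
Qed.

(** * Disjoint rectangles in a square *)

Definition between (y z t : R) : bool :=
  (if Rlt_dec y t then true else false) && (if Rlt_dec t z then true else false).

Definition grid_hits (n : nat) (d y z : R) : R :=
  sum_if (seq 0 (S n)) (fun j => between y z (INR j * d)) (fun _ => 1).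

Lemma grid_hits_ge0 n d y z : 0 <= grid_hits n d y z.
Proof. apply sum_if_ge0. intros; lra. Qed.

Lemma grid_hits_lb n d y z : 0 < d -> 0 <= y -> z <= INR n * d ->
  z - y - d <= d * grid_hits n d y z.
Proof.
  intros Hd. revert y z. induction n as [|n IH]; intros y z Hy Hz.
  - pose proof (grid_hits_ge0 0 d y z). simpl INR in Hz. nra.
  - assert (Hmono : grid_hits n d y z <= grid_hits (S n) d y z).
    { unfold grid_hits. rewrite (seq_S (S n)), sum_if_app. simpl (sum_if [_] _ _).
      destruct (between _ _ _); lra. }
    pose proof (grid_hits_ge0 n d y z).
    rewrite S_INR in Hz.
    destruct (Rle_dec z (INR n * d)) as [Hz'|Hz']; [specialize (IH y z Hy Hz'); nra|].
    destruct (Rlt_dec y (INR n * d)) as [Hy'|Hy']; [|nra].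
    (* The grid point n d is counted for (y, z) but not for (y, n d). *)
    assert (Hstep : grid_hits n d y (INR n * d) + 1 <= grid_hits n d y z).
    { unfold grid_hits. apply (sum_if_add_le_pred _ _ _ (fun _ => 1) n).
      - apply seq_NoDup.
      - apply in_seq. lia.
      - unfold between. destruct (Rlt_dec (INR n * d) (INR n * d)); [lra|].
        now rewrite Bool.andb_false_r.
      - unfold between. destruct (Rlt_dec y (INR n * d)); [|lra].
        destruct (Rlt_dec (INR n * d) z); [reflexivity|lra].
      - intros l _. unfold between.
        destruct (Rlt_dec y (INR l * d)); [|discriminate].
        destruct (Rlt_dec (INR l * d) (INR n * d)); [|discriminate].
        destruct (Rlt_dec (INR l * d) z); [reflexivity|lra].
      - intros; lra. }
    specialize (IH y (INR n * d) Hy (Rle_refl _)). nra.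
Qed.

Section Rectangles.

Context {T : Type} (X Y W H : T -> R).

Definition rect_disjoint (p q : T) : Prop :=
  X p + W p <= X q \/ X q + W q <= X p \/ Y p + H p <= Y q \/ Y q + H q <= Y p.

(* Induction on the size: the first interval splits the others into those on its left and
   those on its right. *)
Lemma intervals_total_length n (l : list T) lo hi :
  (length l <= n)%nat -> lo <= hi ->
  (forall p, In p l -> lo <= X p /\ X p + W p <= hi) ->
  ForallOrdPairs (fun p q => X p + W p <= X q \/ X q + W q <= X p) l ->
  sum_if l (fun _ => true) W <= hi - lo.
Proof.
  revert l lo hi; induction n as [|n IH]; intros l lo hi Hn Hlh Hin F.
  - destruct l; simpl in *; [lra|lia].
  - destruct l as [|x l]; simpl; [lra|].
    inversion F as [|? ? Fx Fl]; subst.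
    rewrite Forall_forall in Fx.
    set (left_of := fun q => if Rle_dec (X q + W q) (X x) then true else false).
    rewrite (sum_if_split l left_of), !(sum_if_filter l).
    assert (Hx := Hin x (or_introl eq_refl)).
    assert (Hl : sum_if (filter left_of l) (fun _ => true) W <= X x - lo).
    { apply IH; try lra.
      - pose proof (filter_length_le left_of l). simpl in Hn. lia.
      - intros p Hp. apply filter_In in Hp as [Hp Hb].
        unfold left_of in Hb. destruct (Rle_dec _ _); [|discriminate].
        split; [apply Hin; simpl; auto | lra].
      - apply ForallOrdPairs_filter; auto. }
    assert (Hr : sum_if (filter (fun q => negb (left_of q)) l) (fun _ => true) W
                 <= hi - (X x + W x)).
    { apply IH; try lra.
      - pose proof (filter_length_le (fun q => negb (left_of q)) l). simpl in Hn. lia.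
      - intros p Hp. apply filter_In in Hp as [Hp Hb].
        unfold left_of in Hb. destruct (Rle_dec _ _); [discriminate|].
        specialize (Fx p Hp). assert (Hp2 := Hin p (or_intror Hp)). lra.
      - apply ForallOrdPairs_filter; auto. }
    lra.
Qed.

Lemma area_bound d n N (L : list T) : 0 < d -> N = INR n * d ->
  (forall p, In p L ->
     0 <= X p /\ X p + W p <= N /\ 0 <= Y p /\ Y p + H p <= N /\ 0 <= W p) ->
  ForallOrdPairs rect_disjoint L ->
  sum_if L (fun _ => true) (fun p => W p * (H p - d)) <= d * (INR n + 1) * N.
Proof.
  intros Hd HN Hin Hdisj.
  set (crosses := fun (t : R) (p : T) => between (Y p) (Y p + H p) t).
  assert (Hline : forall t, sum_if L (crosses t) W <= N).
  { intros t. rewrite sum_if_filter. replace N with (N - 0) by ring.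
    apply (intervals_total_length (length (filter (crosses t) L))); [lia| | |].
    - assert (0 <= INR n) by apply pos_INR. nra.
    - intros p Hp. apply filter_In in Hp as [Hp _]. destruct (Hin p Hp); lra.
    - apply (ForallOrdPairs_impl_in rect_disjoint);
        [|apply ForallOrdPairs_filter; auto].
      intros p q Hp Hq Hpq. apply filter_In in Hp as [_ Hp]. apply filter_In in Hq as [_ Hq].
      unfold crosses, between in Hp, Hq.
      destruct (Rlt_dec (Y p) t); [|discriminate].
      destruct (Rlt_dec t (Y p + H p)); [|discriminate].
      destruct (Rlt_dec (Y q) t); [|discriminate].
      destruct (Rlt_dec t (Y q + H q)); [|discriminate].
      unfold rect_disjoint in Hpq. lra. }
  set (J := seq 0 (S n)).
  assert (Hlines : sum_if J (fun _ => true) (fun j => sum_if L (crosses (INR j * d)) W)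
                   <= INR (S n) * N).
  { replace (INR (S n)) with (INR (length J)) by (unfold J; rewrite length_seq; reflexivity).
    rewrite <- sum_if_const. apply sum_if_le_w. auto. }
  rewrite sum_if_swap, S_INR in Hlines.
  eapply Rle_trans; [|rewrite Rmult_assoc; apply Rmult_le_compat_l; [lra|exact Hlines]].
  rewrite <- sum_if_scal. apply sum_if_le_w. intros p Hp _.
  rewrite sum_if_const_count.
  destruct (Hin p Hp) as (_ & _ & Hy & Hyh & Hw).
  pose proof (grid_hits_lb n d (Y p) (Y p + H p) Hd Hy ltac:(lra)) as Hhits.
  unfold grid_hits in Hhits. fold J in Hhits. unfold crosses.
  set (hits := sum_if J _ (fun _ => 1)) in *.
  assert (0 <= W p * (d * hits - (H p - d))) by (apply Rmult_le_pos; lra).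
  nra.
Qed.

End Rectangles.

(** * No feasible packing has more than 2k items *)

Lemma nth_le_Mmax (A : list nat) i : (nth i A 0 <= Mmax A)%nat.
Proof.
  destruct (Nat.lt_ge_cases i (length A)) as [Hi|Hi]; [|rewrite nth_overflow; lia].
  assert (Hall := proj1 (list_max_le A (list_max A)) (le_n _)).
  rewrite Forall_forall in Hall. apply Hall, nth_In, Hi.
Qed.

Lemma Mmax_pos (A : list nat) i :
  Forall (fun a => (0 < a)%nat) A -> (i < length A)%nat -> 0 < INR (Mmax A).
Proof.
  intros HA Hi. apply lt_0_INR.
  rewrite Forall_forall in HA. specialize (HA _ (nth_In A 0%nat Hi)).
  pose proof (nth_le_Mmax A i). lia.
Qed.

Lemma Nsize_eq A k : Nsize A k = 2 * INR (Mmax A) * INR k ^ 4.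
Proof. reflexivity. Qed.

Lemma item_dims A k it : (2 <= k)%nat ->
  let M := INR (Mmax A) in let K := INR k in
  0 <= item_w A k it <= M * (K ^ 4 + 1) /\ 0 <= item_h A k it <= M * (K ^ 4 + 1) /\
  M ^ 2 * (2 * K ^ 7 - K ^ 4 - 1) <= item_w A k it * item_h A k it.
Proof.
  intros Hk M K.
  assert (HK : 2 <= K) by (apply (le_INR 2); auto).
  set (a := INR (nth (fst it) A 0%nat)).
  assert (Ha0 : 0 <= a) by apply pos_INR.
  assert (HaM : a <= M) by (apply le_INR, nth_le_Mmax).
  assert (Hu : Nsize A k / K = 2 * M * K ^ 3) by (unfold Nsize, M, K in *; field; lra).
  assert (HK3 : 1 <= K ^ 3) by (rewrite <- (pow1 3); apply pow_incr; lra).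
  assert (HK4 : K ^ 4 = K * K ^ 3) by ring.
  assert (HK7 : K ^ 7 = K ^ 3 * K ^ 4) by ring.
  unfold item_w, item_h; fold a K.
  rewrite Hu, Nsize_eq; change (INR k) with K; fold M.
  assert (0 <= M) by lra.
  assert (HMK : M * (2 * K ^ 3) <= M * K ^ 4) by (rewrite HK4; apply Rmult_le_compat_l; nra).
  assert (0 <= a * (M * K ^ 4 - M * (2 * K ^ 3))) by (apply Rmult_le_pos; lra).
  assert (a * a <= M * M) by nra.
  assert (a * M <= M * M) by nra.
  assert (a * (M * K^4) <= M * (M * K^4)) by (apply Rmult_le_compat_r; nra).
  destruct (snd it); repeat split; nra.
Qed.

Lemma placement_dims A k p : (2 <= k)%nat ->
  let M := INR (Mmax A) in let K := INR k in
  0 <= pw A k p <= M * (K ^ 4 + 1) /\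
  M ^ 2 * (2 * K ^ 7 - K ^ 4 - 1) <= pw A k p * ph A k p.
Proof.
  intros Hk M K. destruct (item_dims A k (pl_item p) Hk) as (Hw & Hh & Harea).
  unfold pw, ph. destruct (pl_rot p); [rewrite (Rmult_comm (item_h _ _ _))|]; tauto.
Qed.

Lemma pow_gap_2k1 K : 9 <= K -> 4 * K ^ 8 + 2 * K ^ 4 < (2 * K + 1) * (2 * K ^ 7 - 2 * K ^ 4 - 2).
Proof.
  intros HK.
  assert (H2 : 81 <= K ^ 2) by (simpl; nra).
  assert (H4 : 6561 <= K ^ 4) by (replace (K ^ 4) with (K ^ 2 * K ^ 2) by ring; nra).
  assert (H5 : 9 * K ^ 4 <= K ^ 5) by (replace (K ^ 5) with (K * K ^ 4) by ring; nra).
  assert (H7 : 81 * K ^ 5 <= K ^ 7) by (replace (K ^ 7) with (K ^ 2 * K ^ 5) by ring; nra).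
  assert (K ^ 8 = K * K ^ 7) by ring.
  nra.
Qed.

Lemma feasible_length_le A k P : (9 <= k)%nat -> Forall (fun a => (0 < a)%nat) A ->
  feasible true A k P -> (length P <= 2 * k)%nat.
Proof.
  intros Hk HA [Hin [_ Hdisj]].
  destruct P as [|p0 P0] eqn:EP; [simpl; lia|]. rewrite <- EP in *.
  set (M := INR (Mmax A)). set (K := INR k).
  assert (HM : 0 < M).
  { apply (Mmax_pos A (fst (pl_item p0))); auto.
    apply Hin. rewrite EP. left. reflexivity. }
  assert (HK : 9 <= K) by (replace 9 with (INR 9) by (simpl; ring); apply le_INR; lia).
  assert (Harea : sum_if P (fun _ => true) (fun p => pw A k p * (ph A k p - M))
                  <= M * (INR (2 * k ^ 4) + 1) * Nsize A k).
  { apply (area_bound pl_x pl_y); auto.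
    - rewrite mult_INR, pow_INR, Nsize_eq. fold M K. simpl (INR 2). ring.
    - intros p Hp. destruct (Hin p Hp) as (_ & _ & Hx & Hxw & Hy & Hyh).
      destruct (placement_dims A k p ltac:(lia)) as [Hw _]. repeat split; lra.
    - apply (ForallOrdPairs_of_nth _ _ dummy_pl), Hdisj. }
  rewrite mult_INR, pow_INR, Nsize_eq in Harea. fold M K in Harea. simpl (INR 2) in Harea.
  assert (Hlow : INR (length P) * (M ^ 2 * (2 * K ^ 7 - 2 * K ^ 4 - 2))
                 <= sum_if P (fun _ => true) (fun p => pw A k p * (ph A k p - M))).
  { rewrite <- sum_if_const. apply sum_if_le_w. intros p _ _.
    destruct (placement_dims A k p ltac:(lia)) as [Hw Harea_p]. fold M K in Hw, Harea_p.
    assert (pw A k p * M <= M * (K ^ 4 + 1) * M) by (apply Rmult_le_compat_r; lra).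
    nra. }
  assert (Hup : INR (length P) * (2 * K ^ 7 - 2 * K ^ 4 - 2) <= 4 * K ^ 8 + 2 * K ^ 4).
  { apply (Rmult_le_reg_l (M ^ 2)); [apply pow_lt; lra|]. nra. }
  pose proof (pow_gap_2k1 K HK).
  assert (Hc : 0 < 2 * K ^ 7 - 2 * K ^ 4 - 2) by nra.
  destruct (le_lt_dec (length P) (2 * k)) as [ok|bad]; auto. exfalso.
  assert (Hn : 2 * K + 1 <= INR (length P)).
  { replace (2 * K + 1) with (INR (S (2 * k)))
      by (rewrite S_INR, mult_INR; unfold K; simpl; ring).
    apply le_INR. lia. }
  nra.
Qed.

(** * Packing a balanced selection *)

Definition before (a : nat -> nat) (i j : nat) : bool :=
  (a j <? a i)%nat || ((a i =? a j)%nat && (i <? j)%nat).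

Ltac unfold_before :=
  unfold before in *;
  repeat match goal with
  | |- context [Nat.ltb ?x ?y] => destruct (Nat.ltb_spec x y)
  | |- context [Nat.eqb ?x ?y] => destruct (Nat.eqb_spec x y)
  | H : context [Nat.ltb ?x ?y] |- _ => destruct (Nat.ltb_spec x y)
  | H : context [Nat.eqb ?x ?y] |- _ => destruct (Nat.eqb_spec x y)
  end; simpl in *; try discriminate; try lia; auto.

Lemma before_irrefl a i : before a i i = false.
Proof. unfold_before. Qed.

Lemma before_trans a i j l :
  before a i j = true -> before a j l = true -> before a i l = true.
Proof. intros. unfold_before. Qed.

Lemma before_total a i j : i <> j -> before a i j = true \/ before a j i = true.
Proof. intros. unfold_before. Qed.

Lemma before_false_le a i j : before a i j = false -> (a i <= a j)%nat.
Proof. intros. unfold_before. Qed.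

Definition offset (L : list nat) (a : nat -> nat) (w : nat -> R) (j : nat) : R :=
  sum_if L (fun l => before a l j) w.

Section Offsets.

Variables (L : list nat) (a : nat -> nat) (w : nat -> R).
Hypothesis L_NoDup : NoDup L.
Hypothesis w_ge0 : forall l, In l L -> 0 <= w l.

Lemma offset_ge0 j : 0 <= offset L a w j.
Proof. apply sum_if_ge0, w_ge0. Qed.

Lemma offset_before i j : In i L -> before a i j = true ->
  offset L a w i + w i <= offset L a w j.
Proof.
  intros Hi Hij. apply sum_if_add_le_pred; auto using before_irrefl.
  intros l _ Hli. eapply before_trans; eauto.
Qed.

Lemma offset_end j : In j L -> offset L a w j + w j <= sum_if L (fun _ => true) w.
Proof. intros Hj. apply sum_if_add_le_pred; auto using before_irrefl. Qed.

End Offsets.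

Definition rotate_K A k (p : placement) : placement :=
  mkPlacement (pl_item p) (pl_rot p)
    (Nsize A k - pl_x p - pw A k p) (Nsize A k - pl_y p - ph A k p).

Lemma inside_rotate_K A k p : inside_K A k p -> inside_K A k (rotate_K A k p).
Proof. unfold inside_K, rotate_K, pw, ph; simpl. lra. Qed.

Lemma disjoint_rotate_K A k p q :
  disjoint_open A k p q -> disjoint_open A k (rotate_K A k p) (rotate_K A k q).
Proof. unfold disjoint_open, rotate_K, pw, ph; simpl. lra. Qed.

Lemma disjoint_open_sym A k p q : disjoint_open A k p q -> disjoint_open A k q p.
Proof. unfold disjoint_open. tauto. Qed.

Section Block.

Variables (A : list nat) (k : nat) (f : nat -> nat).
Hypothesis k_ge2 : (2 <= k)%nat.

Definition size (j : nat) : nat := nth (f j) A 0%nat.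

Definition row_width (b : bool) (j : nat) : R := item_w A k (f j, b).

Definition block (L : list nat) (s : nat * bool) : placement :=
  mkPlacement (f (fst s), snd s) false (offset L size (row_width (snd s)) (fst s))
    (if snd s then Nsize A k / 2 - INR (size (fst s)) else 0).

Lemma pw_block L s : pw A k (block L s) = row_width (snd s) (fst s).
Proof. reflexivity. Qed.

Lemma row_width_ge0 b j : 0 <= row_width b j.
Proof. apply (item_dims A k (f j, b) k_ge2). Qed.

Lemma row_width_le b j : row_width true j <= row_width b j.
Proof.
  pose proof (pos_INR (size j)). unfold row_width, item_w, size in *.
  destruct b; simpl; lra.
Qed.

Lemma bottom_height_ge0 j : 0 <= Nsize A k / 2 - INR (size j).
Proof. apply (item_dims A k (f j, false) k_ge2). Qed.

Section InBlock.

Variable L : list nat.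
Hypothesis L_NoDup : NoDup L.

Lemma block_x_bounds s : In (fst s) L ->
  0 <= pl_x (block L s) /\
  pl_x (block L s) + pw A k (block L s) <= sum_if L (fun _ => true) (row_width (snd s)).
Proof.
  intros Hs. split; [apply offset_ge0|apply offset_end]; auto using row_width_ge0.
Qed.

Lemma block_y_bounds s :
  0 <= pl_y (block L s) /\ pl_y (block L s) + ph A k (block L s) <= Nsize A k.
Proof.
  pose proof (bottom_height_ge0 (fst s)). pose proof (pos_INR (size (fst s))).
  unfold block, ph, item_h, size in *; simpl. destruct (snd s); simpl; lra.
Qed.

Lemma block_inside s : In (fst s) L ->
  sum_if L (fun _ => true) (row_width (snd s)) <= Nsize A k -> inside_K A k (block L s).
Proof.
  intros Hs Htotal. destruct (block_x_bounds s Hs), (block_y_bounds s).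
  repeat split; lra.
Qed.

Lemma block_disjoint_rows i j : In i L -> In j L ->
  disjoint_open A k (block L (i, false)) (block L (j, true)).
Proof.
  intros Hi Hj. unfold disjoint_open. rewrite !pw_block.
  unfold ph; cbn [block pl_x pl_y pl_rot pl_item fst snd].
  destruct (before size j i) eqn:Hji.
  - right; left.
    assert (offset L size (row_width true) j <= offset L size (row_width false) j)
      by (apply sum_if_le_w; intros; apply row_width_le).
    pose proof (offset_before L size (row_width false) L_NoDup
                  (fun l _ => row_width_ge0 false l) j i Hj Hji).
    pose proof (row_width_le false j). lra.
  - right; right; left.
    apply before_false_le, le_INR in Hji. unfold item_h, size in *; simpl. lra.
Qed.

Lemma block_disjoint s t : In (fst s) L -> In (fst t) L -> s <> t ->
  disjoint_open A k (block L s) (block L t).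
Proof.
  destruct s as [i b], t as [j c]; simpl. intros Hi Hj Hst.
  destruct b, c.
  2: apply disjoint_open_sym.
  2,3: apply block_disjoint_rows; auto.
  all: assert (Hij : i <> j) by congruence.
  all: destruct (before_total size i j Hij) as [Hb|Hb]; [left|right; left].
  all: apply (offset_before L size _ L_NoDup (fun l _ => row_width_ge0 _ l)); auto.
Qed.

End InBlock.
End Block.

Section Layout.

Variables (A : list nat) (k : nat) (f : nat -> nat) (m : nat).
Hypothesis k_ge2 : (2 <= k)%nat.
Hypothesis m_le_k : (m <= k)%nat.
Hypothesis balanced :
  sum_if (seq 0 m) (fun _ => true) (fun j => INR (size A f j)) =
  sum_if (seq m (k - m)) (fun _ => true) (fun j => INR (size A f j)).

Definition layout (s : nat * bool) : placement :=
  if (fst s <? m)%nat then block A k f (seq 0 m) s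
  else rotate_K A k (block A k f (seq m (k - m)) s).

Let u := Nsize A k / INR k.

Let size_sum L := sum_if L (fun _ => true) (fun j => INR (size A f j)).

Lemma row_total_bottom L :
  sum_if L (fun _ => true) (row_width A k f false) = INR (length L) * u + size_sum L.
Proof.
  change (row_width A k f false) with (fun j => u + INR (size A f j)).
  rewrite sum_if_plus, sum_if_const. reflexivity.
Qed.

Lemma row_total_top L :
  sum_if L (fun _ => true) (row_width A k f true) = INR (length L) * u - size_sum L.
Proof.
  change (row_width A k f true) with (fun j => u - INR (size A f j)).
  rewrite sum_if_minus, sum_if_const. reflexivity.
Qed.

Lemma size_sum_le L : size_sum L <= INR (length L) * u.
Proof.
  rewrite <- sum_if_const. apply sum_if_le_w. intros j _ _.
  pose proof (row_width_ge0 A k f k_ge2 true j). unfold row_width, item_w, size in *; simpl in *.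
  unfold u. lra.
Qed.

Let S := size_sum (seq 0 m).

Lemma layout_budget :
  Nsize A k = INR m * u + INR (k - m) * u /\ 0 <= S /\ S <= INR m * u /\ S <= INR (k - m) * u.
Proof.
  assert (HK : 0 < INR k) by (apply lt_0_INR; lia).
  assert (Hlen1 := size_sum_le (seq 0 m)). assert (Hlen2 := size_sum_le (seq m (k - m))).
  rewrite length_seq in Hlen1, Hlen2. fold S in Hlen1.
  unfold size_sum in Hlen2. rewrite <- balanced in Hlen2. fold (size_sum (seq 0 m)) S in Hlen2.
  repeat split; auto.
  - rewrite <- Rmult_plus_distr_r, <- plus_INR, Nat.add_comm, Nat.sub_add by auto.
    unfold u. field. lra.
  - apply sum_if_ge0. intros. apply pos_INR.
Qed.

Lemma layout_inside s : (fst s < k)%nat -> inside_K A k (layout s).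
Proof.
  intros Hs. destruct layout_budget as (HN & HS0 & HSm & HSkm).
  unfold layout. destruct (Nat.ltb_spec (fst s) m).
  - apply block_inside; [auto|apply seq_NoDup|apply in_seq; lia|].
    destruct (snd s); [rewrite row_total_top|rewrite row_total_bottom];
      rewrite length_seq; fold S; lra.
  - apply inside_rotate_K, block_inside; [auto|apply seq_NoDup|apply in_seq; lia|].
    destruct (snd s); [rewrite row_total_top|rewrite row_total_bottom];
      rewrite length_seq; unfold size_sum; rewrite <- balanced; fold (size_sum (seq 0 m)) S; lra.
Qed.

Lemma layout_cross i b j c : (i < m)%nat -> (m <= j < k)%nat ->
  disjoint_open A k (block A k f (seq 0 m) (i, b))
    (rotate_K A k (block A k f (seq m (k - m)) (j, c))).
Proof.
  intros Hi Hj. destruct layout_budget as (HN & HS0 & HSm & HSkm).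
  destruct (block_x_bounds A k f k_ge2 (seq 0 m) (seq_NoDup _ _) (i, b)) as [_ Hleft];
    [apply in_seq; simpl; lia|].
  destruct (block_x_bounds A k f k_ge2 (seq m (k - m)) (seq_NoDup _ _) (j, c)) as [_ Hright];
    [apply in_seq; simpl; lia|].
  simpl snd in Hleft, Hright.
  unfold disjoint_open, rotate_K; cbn [pl_x pl_y].
  destruct b, c;
    rewrite ?row_total_top, ?row_total_bottom, length_seq in Hleft;
    rewrite ?row_total_top, ?row_total_bottom, length_seq in Hright;
    unfold size_sum in Hright; rewrite <- balanced in Hright;
    fold (size_sum (seq 0 m)) S in Hleft, Hright;
    try (left; lra).
  right; right; left.
  unfold ph, block; cbn [pl_y pl_rot pl_item fst snd].
  pose proof (pos_INR (size A f i)). pose proof (pos_INR (size A f j)).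
  unfold item_h, size in *; simpl. lra.
Qed.

Lemma layout_disjoint s t : (fst s < k)%nat -> (fst t < k)%nat -> s <> t ->
  disjoint_open A k (layout s) (layout t).
Proof.
  intros Hs Ht Hst. unfold layout.
  destruct s as [i b], t as [j c]; simpl in *.
  destruct (Nat.ltb_spec i m), (Nat.ltb_spec j m).
  - apply block_disjoint; auto using seq_NoDup; simpl; apply in_seq; lia.
  - apply layout_cross; lia.
  - apply disjoint_open_sym, layout_cross; lia.
  - apply disjoint_rotate_K, block_disjoint; auto using seq_NoDup; simpl; apply in_seq; lia.
Qed.

End Layout.

Definition slot_items (g : nat -> nat) (L : list nat) : list item :=
  flat_map (fun j => [(g j, false); (g j, true)]) L.

Lemma In_slot_items L s : In s (slot_items (fun j => j) L) -> In (fst s) L.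
Proof.
  unfold slot_items. intros Hs. apply in_flat_map in Hs as [j [Hj Hs]].
  simpl in Hs. destruct Hs as [<-|[<-|[]]]; exact Hj.
Qed.

Lemma slot_items_map g L :
  map (fun s => (g (fst s), snd s)) (slot_items (fun j => j) L) = slot_items g L.
Proof. induction L as [|j L IH]; simpl; [reflexivity|]. rewrite IH. reflexivity. Qed.

Lemma NoDup_slot_items g L : NoDup L ->
  (forall i j, In i L -> In j L -> g i = g j -> i = j) -> NoDup (slot_items g L).
Proof.
  induction L as [|x L IH]; simpl; intros ND Hg; [constructor|].
  inversion ND as [|? ? Hx ND']; subst.
  assert (Hfresh : forall b, ~ In (g x, b) (slot_items g L)).
  { intros b Hb. apply in_flat_map in Hb as [j [Hj Hb]].
    assert (g j = g x) by (destruct Hb as [E|[E|[]]]; inversion E; auto).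
    assert (j = x) by (apply Hg; simpl; auto). subst. contradiction. }
  constructor.
  - intros [E|E]; [discriminate|]. eapply Hfresh; eauto.
  - constructor; [apply Hfresh|]. apply IH; [exact ND'|]. intros; apply Hg; simpl; auto.
Qed.

Lemma nth_map_pairwise {X Y} (g : X -> Y) (Rl : Y -> Y -> Prop) (L : list X) d :
  NoDup L -> (forall s t, In s L -> In t L -> s <> t -> Rl (g s) (g t)) ->
  forall i j, (i < length (map g L))%nat -> (j < length (map g L))%nat -> i <> j ->
  Rl (nth i (map g L) d) (nth j (map g L) d).
Proof.
  intros ND Hpair i j Hi Hj Hij.
  destruct L as [|x0 L0]; [simpl in Hi; lia|].
  rewrite (nth_indep _ d (g x0) Hi), (nth_indep _ d (g x0) Hj), !map_nth.
  rewrite length_map in Hi, Hj. apply Hpair; try apply nth_In; auto.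
  intros E. apply Hij. eapply NoDup_nth; eauto.
Qed.

Lemma balanced_packing_exists A k f m : (2 <= k)%nat -> (m <= k)%nat ->
  (forall j, (j < k)%nat -> (f j < length A)%nat) ->
  (forall i j, (i < k)%nat -> (j < k)%nat -> f i = f j -> i = j) ->
  list_sum_nat (map (size A f) (seq 0 m)) = list_sum_nat (map (size A f) (seq m (k - m))) ->
  exists P, feasible false A k P /\ Permutation (map pl_item P) (slot_items f (seq 0 k)).
Proof.
  intros Hk Hm Hf Hinj Hsum.
  assert (Hbal : sum_if (seq 0 m) (fun _ => true) (fun j => INR (size A f j)) =
                 sum_if (seq m (k - m)) (fun _ => true) (fun j => INR (size A f j)))
    by (rewrite !sum_if_INR, Hsum; reflexivity).
  set (slots := slot_items (fun j => j) (seq 0 k)).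
  assert (Hslots : forall s, In s slots -> (fst s < k)%nat)
    by (intros s Hs; apply In_slot_items, in_seq in Hs; lia).
  assert (Hitems : map pl_item (map (layout A k f m) slots) = slot_items f (seq 0 k)).
  { rewrite map_map, <- slot_items_map. apply map_ext. intros [j b].
    unfold layout. destruct (_ <? _)%nat; reflexivity. }
  exists (map (layout A k f m) slots). split; [split; [|split]|].
  - intros p Hp. apply in_map_iff in Hp as [s [<- Hs]].
    specialize (Hslots s Hs). split; [|split].
    + unfold layout. destruct (_ <? _)%nat; apply Hf; exact Hslots.
    + intros _. unfold layout. destruct (_ <? _)%nat; reflexivity.
    + apply layout_inside; auto.
  - rewrite Hitems. apply NoDup_slot_items; [apply seq_NoDup|].
    intros i j Hi Hj. apply in_seq in Hi, Hj. apply Hinj; lia.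
  - apply nth_map_pairwise.
    + apply NoDup_slot_items; [apply seq_NoDup|auto].
    + intros s t Hs Ht. apply layout_disjoint; auto.
  - rewrite Hitems. apply Permutation_refl.
Qed.

Theorem mainTheorem9 (k : nat) (A : list nat) :
  Nat.Odd k -> (9 <= k)%nat -> Forall (fun a => (0 < a)%nat) A ->
  (forall (f : nat -> nat) (m : nat),
      (forall j, (j < k)%nat -> (f j < length A)%nat) ->
      (forall i j, (i < k)%nat -> (j < k)%nat -> f i = f j -> i = j) ->
      (1 <= m <= k - 1)%nat ->
      (list_sum_nat (map (fun j => nth (f j) A 0) (seq 0 m)) =
       list_sum_nat (map (fun j => nth (f j) A 0) (seq m (k - m))))%nat ->
      exists P : list placement,
        feasible false A k P /\
        Permutation (map pl_item P)
          (flat_map (fun j => [(f j, false); (f j, true)]) (seq 0 k))) /\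
  (forall P : list placement, feasible true A k P -> (length P <= 2 * k)%nat).
Proof.
  intros _ Hk HA. split.
  - intros f m Hf Hinj Hm Hsum. apply (balanced_packing_exists A k f m); auto; lia.
  - intros P. apply feasible_length_le; auto.
Qed.
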